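(* Assume the standing setting, let $\epsilon>0$, fix a coarse index $j$ and an integer $m$ with $1\le m\le r/2$. If $|u^0_i-u^0_{i+1}|\le \epsilon/3^{M}$ for all $i\in\mathbb Z$, then $|u^M_{jr}-u^M_{jr+m}|\le m\epsilon$.
   Context: Standing setting. Let $F:\mathbb R\to\mathbb R$ be continuously differentiable. For a spatial step $\eta>0$, a time step $\tau>0$ and an initial sequence $(z^0_i)_{i\in\mathbb Z}$ of reals, the EFC (Euler forward in time, centered in space) scheme produces $(z^n_i)_{i\in\mathbb Z,\,n\in\mathbb N}$ by $z^{n+1}_i=z^n_i-F'(z^n_i)\frac{\tau}{2\eta}\,(z^n_{i+1}-z^n_{i-1})$. It satisfies the CFL condition if $|F'(z^n_i)|\,\tau/\eta\le 1$ for all $i\in\mathbb Z$, $n\in\mathbb N$. Fix $a\in\mathbb R$, $h>0$, $\Delta t>0$, an integer $N>1$ and an even integer $r\ge 2$; put $k=h/r$, $dt=\Delta t/r$, $M=Nr$. Let $u_0:\mathbb R\to\mathbb R$. The coarse solution $(w^n_j)$ is the EFC scheme with $\eta=h$, $\tau=\Delta t$, $w^0_j=u_0(a+jh)$; the fine solution $(u^n_i)$ is the EFC scheme with $\eta=k$, $\tau=dt$, $u^0_i=u_0(a+ik)$ (so $w^0_j=u^0_{jr}$). Both are assumed to satisfy the CFL condition. *)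

From Stdlib Require Import Reals Lra Lia ZArith.
Open Scope R_scope.

(* EFC scheme (Euler forward in time, centered in space) for the flux F,
   given through its derivative dF = F'.  [efc dF eta tau z0 n i] = z^n_i. *)
Fixpoint efc (dF : R -> R) (eta tau : R) (z0 : Z -> R) (n : nat) : Z -> R :=
  match n with
  | O => z0
  | S n' => fun i =>
      efc dF eta tau z0 n' i
      - dF (efc dF eta tau z0 n' i) * (tau / (2 * eta))
        * (efc dF eta tau z0 n' (i + 1)%Z - efc dF eta tau z0 n' (i - 1)%Z)
  end.

Definition cfl (dF : R -> R) (eta tau : R) (z : nat -> Z -> R) : Prop :=
  forall (n : nat) (i : Z), Rabs (dF (z n i)) * tau / eta <= 1.

(* Under the CFL condition each EFC step is [z_i - c_i (z_{i+1} - z_{i-1})] with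
   [|c_i| <= 1/2], so the differences of neighbouring values grow by at most a factor 3
   per time step: after [M] steps they are at most [eps], and the triangle inequality
   over [m] consecutive neighbours gives the bound [m eps]. *)
From Stdlib Require Import Reals ZArith Arith Lra Lia.
Open Scope R_scope.

Lemma cfl_coef_le_half (d tau eta : R) : 0 < eta -> 0 < tau ->
  Rabs d * tau / eta <= 1 -> Rabs (d * (tau / (2 * eta))) <= / 2.
Proof.
  intros Heta Htau Hcfl.
  rewrite Rabs_mult, (Rabs_right (tau / (2 * eta))).
  - replace (Rabs d * (tau / (2 * eta))) with (Rabs d * tau / eta / 2) by (field; lra).
    lra.
  - apply Rle_ge, Rlt_le, Rdiv_lt_0_compat; lra.
Qed.

Lemma Rabs_mult_le_half (c x B : R) :
  Rabs c <= / 2 -> Rabs x <= 2 * B -> Rabs (c * x) <= B.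
Proof.
  intros Hc Hx; rewrite Rabs_mult.
  pose proof (Rabs_pos c); pose proof (Rabs_pos x); nra.
Qed.

Lemma centered_step_diff_le (z c : Z -> R) (D : R) :
  (forall i, Rabs (c i) <= / 2) ->
  (forall i, Rabs (z i - z (i + 1)%Z) <= D) ->
  forall i,
    Rabs ((z i - c i * (z (i + 1)%Z - z (i - 1)%Z))
          - (z (i + 1)%Z - c (i + 1)%Z * (z (i + 1 + 1)%Z - z (i + 1 - 1)%Z)))
    <= 3 * D.
Proof.
  intros Hc Hz i.
  replace (i + 1 - 1)%Z with i by lia.
  assert (Hleft := Hz (i - 1)%Z); replace (i - 1 + 1)%Z with i in Hleft by lia.
  assert (Hmid := Hz i); assert (Hright := Hz (i + 1)%Z).
  assert (Hc_left : Rabs (c i * (z (i + 1)%Z - z (i - 1)%Z)) <= D).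
  { apply Rabs_mult_le_half; [apply Hc|].
    replace (z (i + 1)%Z - z (i - 1)%Z)
      with (- ((z i - z (i + 1)%Z) + (z (i - 1)%Z - z i))) by ring.
    rewrite Rabs_Ropp; eapply Rle_trans; [apply Rabs_triang | lra]. }
  assert (Hc_right : Rabs (c (i + 1)%Z * (z (i + 1 + 1)%Z - z i)) <= D).
  { apply Rabs_mult_le_half; [apply Hc|].
    replace (z (i + 1 + 1)%Z - z i)
      with (- ((z i - z (i + 1)%Z) + (z (i + 1)%Z - z (i + 1 + 1)%Z))) by ring.
    rewrite Rabs_Ropp; eapply Rle_trans; [apply Rabs_triang | lra]. }
  match goal with |- Rabs ?e <= _ =>
    replace e with ((z i - z (i + 1)%Z) - c i * (z (i + 1)%Z - z (i - 1)%Z)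
                    + c (i + 1)%Z * (z (i + 1 + 1)%Z - z i)) by ring end.
  eapply Rle_trans; [apply Rabs_triang|].
  eapply Rle_trans; [apply Rplus_le_compat_r, Rabs_triang|].
  rewrite Rabs_Ropp; lra.
Qed.

Lemma efc_diff_le (dF : R -> R) (eta tau : R) (z0 : Z -> R) (D : R) :
  0 < eta -> 0 < tau -> cfl dF eta tau (efc dF eta tau z0) ->
  (forall i, Rabs (z0 i - z0 (i + 1)%Z) <= D) ->
  forall n i, Rabs (efc dF eta tau z0 n i - efc dF eta tau z0 n (i + 1)%Z) <= D * 3 ^ n.
Proof.
  intros Heta Htau Hcfl H0 n; induction n as [|n IH]; intro i.
  - rewrite Rmult_1_r; apply H0.
  - replace (D * 3 ^ S n) with (3 * (D * 3 ^ n)) by (simpl; ring).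
    apply (centered_step_diff_le (efc dF eta tau z0 n)
             (fun l => dF (efc dF eta tau z0 n l) * (tau / (2 * eta)))); [|exact IH].
    intro l; exact (cfl_coef_le_half _ _ _ Heta Htau (Hcfl n l)).
Qed.

Lemma Rabs_sub_shift_le (f : Z -> R) (D : R) :
  (forall l, Rabs (f l - f (l + 1)%Z) <= D) ->
  forall (i : Z) (m : nat), Rabs (f i - f (i + Z.of_nat m)%Z) <= INR m * D.
Proof.
  intros H i m; induction m as [|m IH].
  - rewrite Z.add_0_r, Rminus_diag, Rabs_R0; simpl; lra.
  - rewrite S_INR, Nat2Z.inj_succ.
    replace (i + Z.succ (Z.of_nat m))%Z with (i + Z.of_nat m + 1)%Z by lia.
    replace (f i - f (i + Z.of_nat m + 1)%Z)
      with ((f i - f (i + Z.of_nat m)%Z)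
            + (f (i + Z.of_nat m)%Z - f (i + Z.of_nat m + 1)%Z)) by ring.
    eapply Rle_trans; [apply Rabs_triang|].
    specialize (H (i + Z.of_nat m)%Z); lra.
Qed.

Theorem proposition9 :
  forall (F dF : R -> R),
    (forall x, derivable_pt_lim F x (dF x)) -> continuity dF ->
  forall (a h Dt : R) (N r : nat) (u0 : R -> R),
    0 < h -> 0 < Dt -> (1 < N)%nat -> (2 <= r)%nat -> Nat.Even r ->
    let k := h / INR r in
    let dt := Dt / INR r in
    let M := (N * r)%nat in
    let w := efc dF h Dt (fun j => u0 (a + IZR j * h)) in
    let u := efc dF k dt (fun i => u0 (a + IZR i * k)) in
    cfl dF h Dt w -> cfl dF k dt u ->
  forall (eps : R) (j : Z) (m : nat),
    0 < eps -> (1 <= m)%nat -> (2 * m <= r)%nat ->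
    (forall i : Z, Rabs (u O i - u O (i + 1)%Z) <= eps / 3 ^ M) ->
    Rabs (u M (j * Z.of_nat r)%Z - u M (j * Z.of_nat r + Z.of_nat m)%Z) <= INR m * eps.
Proof.
  intros F dF _ _ a h Dt N r u0 Hh HDt _ Hr _ k dt M w u _ Hcfl eps j m _ _ _ H0.
  assert (Hr_pos : 0 < INR r) by (apply lt_0_INR; lia).
  assert (Hk : 0 < k) by (apply Rdiv_lt_0_compat; assumption).
  assert (Hdt : 0 < dt) by (apply Rdiv_lt_0_compat; assumption).
  assert (H3M : 0 < 3 ^ M) by (apply pow_lt; lra).
  apply Rabs_sub_shift_le.
  replace eps with (eps / 3 ^ M * 3 ^ M) by (field; lra).
  exact (efc_diff_le dF k dt _ _ Hk Hdt Hcfl H0 M).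
Qed.
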